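(* Let $q\in\mathbb{C}^*$, $\lambda\in\mathbb{C}^*$ and $a,b\in\mathbb{C}$. Regard $\Omega_{\mathcal{R}}(\lambda,a,b)$ as an $\mathcal{L}$-module via the injective homomorphism $\tau:\mathcal{L}\to\mathcal{R}$. Then $\Omega_{\mathcal{R}}(\lambda,a,b)$ is a simple $\mathcal{L}$-module if and only if it is a simple $\mathcal{R}$-module.
   Context: Let $\mathbb{Z}_+=\{0,1,2,\dots\}$. For $s\in\{0,\frac12\}$ let $S(q)$ be the Lie superalgebra over $\mathbb{C}$ with even basis $\{L_{m,i}\mid m\in\mathbb{Z},i\in\mathbb{Z}_+\}$, odd basis $\{G_{l,j}\mid l\in s+\mathbb{Z},j\in\mathbb{Z}_+\}$ and brackets $[L_{m,i},L_{n,j}]=(n(i+q)-m(j+q))L_{m+n,i+j}$, $[L_{m,i},G_{l,j}]=(l(i+q)-m(j+\frac{q}{2}))G_{m+l,i+j}$, $[G_{l,i},G_{r,j}]=2qL_{l+r,i+j}$. For $s=0$ this is the Ramond-Block algebra $\mathcal{R}$, for $s=\frac12$ the Neveu-Schwarz-Block algebra $\mathcal{L}$ (same $q$). The map $\tau:\mathcal{L}\to\mathcal{R}$ is the linear map with $\tau(L_{m,i})=\frac12L_{2m,i}$, $\tau(G_{r,j})=\frac{1}{\sqrt2}G_{2r,j}$ ($m\in\mathbb{Z}$, $r\in\frac12+\mathbb{Z}$); it is an injective Lie superalgebra homomorphism. Modules are supermodules. For $\lambda\in\mathbb{C}^*$, $a,b\in\mathbb{C}$, $\Omega_{\mathcal{R}}(\lambda,a,b)=\mathbb{C}[t^2]\oplus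 t\mathbb{C}[t^2]$ (even part $\mathbb{C}[t^2]$, odd part $t\mathbb{C}[t^2]$) is the $\mathcal{R}$-module with, for $f\in\mathbb{C}[t^2]$, $m\in\mathbb{Z}$, $i\in\mathbb{Z}_+$: $L_{m,i}f(t^2)=\lambda^m(\delta_{i,0}(t^2-mqa)+\delta_{q,-1}\delta_{i,1}b)f(t^2-mq)$, $L_{m,i}tf(t^2)=\lambda^m t(\delta_{i,0}(t^2-mqa-\frac{mq}{2})+\delta_{q,-1}\delta_{i,1}b)f(t^2-mq)$, $G_{m,i}f(t^2)=\lambda^m\delta_{i,0}tf(t^2-mq)$, $G_{m,i}tf(t^2)=q\lambda^m(\delta_{i,0}(t^2-2mqa)+2\delta_{q,-1}\delta_{i,1}b)f(t^2-mq)$. *)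

From HB Require Import structures.
From mathcomp Require Import all_boot all_order all_algebra.
From mathcomp Require Import reals Rstruct complex.
Set Implicit Arguments. Unset Strict Implicit. Unset Printing Implicit Defensive.
Import Order.TTheory GRing.Theory Num.Theory.
Local Open Scope ring_scope.

Definition CC : Type := (Rdefinitions.R)[i].

(* The underlying space C[t^2] (+) t C[t^2]: a pair (f, g) of polynomials in
   s = t^2 represents the element f(t^2) + t g(t^2); the first component is the
   even part, the second the odd part. *)
Definition Vsp : Type := ({poly CC} * {poly CC})%type.

(* f(t^2 - c), i.e. composition of f (in s = t^2) with s - c *)
Definition shift (c : CC) (f : {poly CC}) : {poly CC} := f \Po ('X - c%:P).

Definition kd (i j : nat) : CC := if i == j then 1 else 0.
Definition qd (q : CC) : CC := if q == -1 then 1 else 0.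

Definition OmL (q lam a b : CC) (m : int) (i : nat) (v : Vsp) : Vsp :=
  let c := m%:~R * q in
  (lam ^ m *: ((kd i 0 *: ('X - (c * a)%:P) + (qd q * kd i 1 * b)%:P) * shift c v.1),
   lam ^ m *: ((kd i 0 *: ('X - (c * a)%:P - (c / 2)%:P) + (qd q * kd i 1 * b)%:P)
                 * shift c v.2)).

Definition OmG (q lam a b : CC) (m : int) (i : nat) (v : Vsp) : Vsp :=
  let c := m%:~R * q in
  ((q * lam ^ m) *: ((kd i 0 *: ('X - (2 * c * a)%:P) + (2 * qd q * kd i 1 * b)%:P)
                       * shift c v.2),
   (lam ^ m * kd i 0) *: shift c v.1).

Inductive RBasis : Type := RL of int & nat | RG of int & nat.
(* Basis elements of the Neveu-Schwarz-Block algebra L (s = 1/2):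
   NSG k j stands for G_{k + 1/2, j}. *)
Inductive NSBasis : Type := NSL of int & nat | NSG of int & nat.

Definition actR (q lam a b : CC) (x : RBasis) : Vsp -> Vsp :=
  match x with
  | RL m i => OmL q lam a b m i
  | RG m i => OmG q lam a b m i
  end.

(* Action of L through tau: tau(L_{m,i}) = 1/2 L_{2m,i},
   tau(G_{r,j}) = 1/sqrt2 G_{2r,j}; for r = k + 1/2, 2r = 2k+1. *)
Definition actL (q lam a b : CC) (x : NSBasis) (v : Vsp) : Vsp :=
  match x with
  | NSL m i => let w := OmL q lam a b (2 * m) i v in (2^-1 *: w.1, 2^-1 *: w.2)
  | NSG k j => let w := OmG q lam a b (2 * k + 1) j v in
               ((sqrtC 2)^-1 *: w.1, (sqrtC 2)^-1 *: w.2)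
  end.

Definition is_subspace (P : {poly CC} -> Prop) : Prop :=
  [/\ P 0, (forall f g, P f -> P g -> P (f + g)) & (forall (c : CC) f, P f -> P (c *: f))].

(* A Z2-graded subspace W0 (+) W1 stable under the action of all basis elements
   (hence, by linearity, under the whole Lie superalgebra). *)
Definition is_submodule (X : Type) (act : X -> Vsp -> Vsp)
    (W0 W1 : {poly CC} -> Prop) : Prop :=
  [/\ is_subspace W0, is_subspace W1 &
      forall x f g, W0 f -> W1 g -> W0 (act x (f, g)).1 /\ W1 (act x (f, g)).2].

Definition simple_module (X : Type) (act : X -> Vsp -> Vsp) : Prop :=
  (exists v : Vsp, v <> (0, 0)) /\
  forall W0 W1, is_submodule act W0 W1 ->
    (forall f, W0 f -> f = 0) /\ (forall g, W1 g -> g = 0)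
    \/ (forall f, W0 f) /\ (forall g, W1 g).

From HB Require Import structures.
From mathcomp Require Import all_boot all_order all_algebra.
From mathcomp Require Import reals Rstruct complex.
Set Implicit Arguments. Unset Strict Implicit. Unset Printing Implicit Defensive.
Import Order.TTheory GRing.Theory Num.Theory.
Local Open Scope ring_scope.

(* Through tau, L acts by nonzero multiples of the R-operators L_{2m,i} and
   G_{2k+1,j}.  On a fixed vector, L_{m,i} and G_{m,i} act as lambda^m times a
   polynomial function of c = mq, and a polynomial function whose values at
   infinitely many points lie in a subspace takes all its values there
   (induction on the degree, dividing by X - x_0).  So the even and odd indices
   seen by L already force stability under all of R: both algebras have the
   same graded submodules on Omega_R(lambda,a,b). *)

Section PolynomialMaps.
Variables (K : fieldType) (A : comAlgType K).

Definition polynomial_map (F : K -> A) : Prop :=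
  exists P : {poly A}, forall c, F c = P.[c%:A].

Lemma polynomial_map_cst (u : A) : polynomial_map (fun=> u).
Proof. by exists u%:P => c; rewrite hornerC. Qed.

Lemma polynomial_mapD F G :
  polynomial_map F -> polynomial_map G -> polynomial_map (fun c => F c + G c).
Proof. by move=> [P FP] [Q GQ]; exists (P + Q) => c; rewrite hornerD FP GQ. Qed.

Lemma polynomial_mapN F : polynomial_map F -> polynomial_map (fun c => - F c).
Proof. by move=> [P FP]; exists (- P) => c; rewrite hornerN FP. Qed.

Lemma polynomial_mapM F G :
  polynomial_map F -> polynomial_map G -> polynomial_map (fun c => F c * G c).
Proof. by move=> [P FP] [Q GQ]; exists (P * Q) => c; rewrite hornerM FP GQ. Qed.

Lemma polynomial_mapZ k F : polynomial_map F -> polynomial_map (fun c => k *: F c).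
Proof. by move=> [P FP]; exists (k%:A%:P * P) => c; rewrite hornerCM FP mulr_algl. Qed.

Section Subspace.
Variable W : A -> Prop.
Hypotheses (W0 : W 0) (WD : forall u v, W u -> W v -> W (u + v))
  (WZ : forall k u, W u -> W (k *: u)).

Lemma subspaceB u v : W u -> W v -> W (u - v).
Proof. by move=> Wu Wv; rewrite -scaleN1r; apply/WD/WZ. Qed.

Lemma subspaceZK k u : k != 0 -> W (k *: u) -> W u.
Proof. by move=> k0 /(WZ k^-1); rewrite scalerK. Qed.

Lemma horner_interpolation (P : {poly A}) (x : nat -> K) : injective x ->
  (forall n, W P.[(x n)%:A]) -> forall y, W P.[y%:A].
Proof.
elim: {P}(size P) {-2}P (leqnn (size P)) x => [|d IH] P sizeP x x_inj WPx y.
  by move: sizeP; rewrite leqn0 size_poly_eq0 => /eqP ->; rewrite horner0.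
have [Q PE] : exists Q, P - (P.[(x 0)%:A])%:P = Q * ('X - ((x 0)%:A)%:P).
  by apply/factor_theorem; rewrite /root !hornerE subrr.
have hornerP z : P.[z%:A] = (z - x 0) *: Q.[z%:A] + P.[(x 0)%:A].
  move/(congr1 (horner^~ z%:A))/eqP: PE.
  by rewrite !hornerE subr_eq => /eqP ->; rewrite -scalerBl mulr_algr.
have sizeQ : (size Q <= d)%N.
  have [->|Q0] := eqVneq Q 0; first by rewrite size_poly0.
  have := size_Mmonic Q0 (monicXsubC (x 0)%:A).
  rewrite size_XsubC addn2 /= -PE -ltnS => <-.
  apply: leq_trans (size_polyD _ _) _.
  by rewrite size_polyN size_polyC geq_max sizeP (leq_trans (leq_b1 _)).
have WQx n : W Q.[(x n.+1)%:A].
  have dx : x n.+1 - x 0 != 0 by rewrite subr_eq0 (inj_eq x_inj).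
  apply: (subspaceZK dx).
  by rewrite -[_ *: _](addrK P.[(x 0)%:A]) -hornerP; apply: subspaceB.
have xS_inj : injective (fun n => x n.+1) by move=> m n /x_inj [].
by rewrite hornerP; apply: WD (WPx 0); apply/WZ/(IH _ sizeQ _ xS_inj WQx).
Qed.

Lemma polynomial_map_interpolation F (x : nat -> K) : polynomial_map F ->
  injective x -> (forall n, W (F (x n))) -> forall y, W (F y).
Proof.
move=> [P FP] x_inj WFx y; rewrite FP.
by apply: horner_interpolation x_inj _ y => n; rewrite -FP.
Qed.

End Subspace.
End PolynomialMaps.

Lemma polynomial_map_polyCMr (K : fieldType) (k : K) :
  polynomial_map (fun c : K => (c * k)%:P).
Proof. by exists ('X * k%:P%:P) => c; rewrite !hornerE alg_polyC polyCM. Qed.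

Lemma polynomial_map_shift (f : {poly CC}) : polynomial_map (fun c => shift c f).
Proof.
exists (f^:P \Po ('X%:P - 'X)) => c.
by rewrite horner_comp !hornerE alg_polyC.
Qed.

Definition polynomial_action (q lam : CC) (act : int -> Vsp -> Vsp) : Prop :=
  forall v, exists F G : CC -> {poly CC},
    [/\ forall m, act m v = (lam ^ m *: F (m%:~R * q), lam ^ m *: G (m%:~R * q)),
        polynomial_map F & polynomial_map G].

Ltac polynomial_map_closure :=
  repeat first
    [ apply: polynomial_map_cst | apply: polynomial_map_shift
    | apply: polynomial_map_polyCMr
    | apply: polynomial_mapD | apply: polynomial_mapN
    | apply: polynomial_mapM | apply: polynomial_mapZ ].

Lemma OmL_polynomial q lam a b i : polynomial_action q lam (fun m => OmL q lam a b m i).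
Proof.
(* Abstracting c := m q lets pattern unification solve for F and G. *)
move=> [f g]; do 2 eexists; split.
  by move=> m; rewrite /OmL /=; move: (_ * q) => c.
all: polynomial_map_closure.
Qed.

Lemma OmG_polynomial q lam a b i : polynomial_action q lam (fun m => OmG q lam a b m i).
Proof.
move=> [f g]; do 2 eexists; split.
  move=> m; rewrite /OmG /= [q * _]mulrC -!scalerA; move: (_ * q) => c.
  by rewrite [2 * c]mulrC -[c * 2 * a]mulrA.
all: polynomial_map_closure.
Qed.

Lemma polynomial_action_stable q lam (act : int -> Vsp -> Vsp) (e : nat -> int)
    (s : CC) (W0 W1 : {poly CC} -> Prop) :
  q != 0 -> lam != 0 -> s != 0 -> injective e ->
  is_subspace W0 -> is_subspace W1 -> polynomial_action q lam act ->
  (forall n f g, W0 f -> W1 g ->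
     W0 (s *: (act (e n) (f, g)).1) /\ W1 (s *: (act (e n) (f, g)).2)) ->
  forall m f g, W0 f -> W1 g -> W0 (act m (f, g)).1 /\ W1 (act m (f, g)).2.
Proof.
move=> q0 lam0 s0 e_inj W0sub W1sub act_poly Wact m f g Wf Wg.
have [F [G [actE Fpoly Gpoly]]] := act_poly (f, g).
have x_inj : injective (fun n => (e n)%:~R * q).
  by move=> n n' /(mulIf q0)/intr_inj/e_inj.
have component (W : {poly CC} -> Prop) H : is_subspace W -> polynomial_map H ->
    (forall n, W ((s * lam ^ e n) *: H ((e n)%:~R * q))) ->
    W (lam ^ m *: H (m%:~R * q)).
  case=> W_0 W_D W_Z Hpoly WH.
  apply/W_Z/(polynomial_map_interpolation W_0 W_D W_Z Hpoly x_inj).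
  move=> n /=; have := subspaceZK W_Z _ (WH n); apply.
  by rewrite mulf_neq0 // expfz_neq0.
rewrite actE /=; split; [apply: (component W0 F) | apply: (component W1 G)] => // n;
  by have := Wact n f g Wf Wg; rewrite actE /= !scalerA; case.
Qed.

Lemma submoduleR_submoduleL q lam a b W0 W1 :
  is_submodule (actR q lam a b) W0 W1 -> is_submodule (actL q lam a b) W0 W1.
Proof.
case=> W0sub W1sub Wact; split=> // x f g Wf Wg.
have [_ _ W0Z] := W0sub; have [_ _ W1Z] := W1sub.
case: x => [m i|k j].
  by case: (Wact (RL (2 * m) i) f g Wf Wg) => W0L W1L; split; [exact: W0Z | exact: W1Z].
by case: (Wact (RG (2 * k + 1) j) f g Wf Wg) => W0G W1G; split; [exact: W0Z | exact: W1Z].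
Qed.

Lemma submoduleL_submoduleR q lam a b W0 W1 : q != 0 -> lam != 0 ->
  is_submodule (actL q lam a b) W0 W1 -> is_submodule (actR q lam a b) W0 W1.
Proof.
move=> q0 lam0 [W0sub W1sub Wact]; split=> // -[m i|m i].
  have two_inv0 : (2 : CC)^-1 != 0 by rewrite invr_eq0 pnatr_eq0.
  have even_inj : injective (fun n : nat => 2 * n%:Z) by move=> n n' /mulfI-/(_ isT) [].
  exact: (polynomial_action_stable q0 lam0 two_inv0 even_inj W0sub W1sub
    (OmL_polynomial q lam a b i) (fun n => Wact (NSL n i)) m).
have sqrt2_inv0 : (sqrtC (2 : CC))^-1 != 0 by rewrite invr_eq0 sqrtC_eq0 pnatr_eq0.
have odd_inj : injective (fun n : nat => 2 * n%:Z + 1).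
  by move=> n n' /addIr/mulfI-/(_ isT) [].
exact: (polynomial_action_stable q0 lam0 sqrt2_inv0 odd_inj W0sub W1sub
  (OmG_polynomial q lam a b i) (fun n => Wact (NSG n i)) m).
Qed.

Lemma eq_simple_module (X Y : Type) (actX : X -> Vsp -> Vsp) (actY : Y -> Vsp -> Vsp) :
  (forall W0 W1, is_submodule actX W0 W1 <-> is_submodule actY W0 W1) ->
  simple_module actX <-> simple_module actY.
Proof.
move=> sub_iff; rewrite /simple_module.
by split=> -[nz simple]; split=> // W0 W1 /sub_iff; apply: simple.
Qed.

Theorem proposition4p2 (q lam a b : CC) (hq : q != 0) (hlam : lam != 0) :
  simple_module (actL q lam a b) <-> simple_module (actR q lam a b).
Proof.
apply: eq_simple_module => W0 W1; split; first exact: submoduleL_submoduleR.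
exact: submoduleR_submoduleL.
Qed.
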